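(* Let $\mathbb{K}$ be a field of characteristic $0$, $A=\{a_1<a_2<\cdots\}$ a countable totally ordered alphabet, and equip $\mathbb{K}\langle A\rangle^+$ with the operations $\prec,\circ,\succ$ defined on nonempty words by: $u\succ v=uv$ if $\max(u)<\max(v)$ and $0$ otherwise; $u\circ v=uv$ if $\max(u)=\max(v)$ and $0$ otherwise; $u\prec v=uv$ if $\max(u)>\max(v)$ and $0$ otherwise (extended bilinearly). Let $\mathbf{M}_1=\sum_{i\ge1}a_i$. Then the sub-dendriform-trialgebra $\mathfrak{T}$ of $\mathbb{K}\langle A\rangle^+$ generated by $\mathbf{M}_1$ is free as a dendriform trialgebra (on the generator $\mathbf{M}_1$).
   Context: $\mathbb{K}\langle A\rangle=\varprojlim\mathbb{K}\langle A_n\rangle$ with $A_n=\{a_1,\dots,a_n\}$, and $\mathbb{K}\langle A\rangle^+$ is its ideal of elements with zero constant term; $\max(w)$ denotes the greatest letter of a nonempty word $w$. A dendriform trialgebra is a vector space with bilinear operations $\prec,\circ,\succ$, with $\circ$ associative, such that, with $x\cdot y=x\prec y+x\circ y+x\succ y$: $(x\prec y)\prec z=x\prec(y\cdot z)$, $(x\succ y)\prec z=x\succ(y\prec z)$, $(x\cdot y)\succ z=x\succ(y\succ z)$, $(x\succ y)\circ z=x\succ(y\circ z)$, $(x\prec y)\circ z=x\circ(y\succ z)$, $(x\circ y)\prec z=x\circ(y\prec z)$. (With these operations $\mathbb{K}\langle A\rangle^+$ is a dendriform trialgebra.) *)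

From mathcomp Require Import all_boot all_order all_algebra.
Set Implicit Arguments. Unset Strict Implicit. Unset Printing Implicit Defensive.
Import GRing.Theory.
Local Open Scope ring_scope.

(* Alphabet A = {a_0 < a_1 < ...} is represented by nat (letter a_i = i);
   words are seq nat.  Elements of K<A> (the inverse limit) are represented
   as coefficient functions on words (formal series). *)
Definition series (K : fieldType) := seq nat -> K.

Section Series.
Variable K : fieldType.

Definition szero : series K := fun _ => 0.
Definition sadd (f g : series K) : series K := fun w => f w + g w.
Definition sscale (a : K) (f : series K) : series K := fun w => a * f w.

Definition maxw (w : seq nat) : nat := foldr maxn 0%N w.

(* bilinear extension of  u op v = uv if c (max u) (max v), 0 otherwise,
   for nonempty words u, v *)
Definition tri_op (c : nat -> nat -> bool) (f g : series K) : series K :=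
  fun w => \sum_(1 <= i < size w | c (maxw (take i w)) (maxw (drop i w)))
              f (take i w) * g (drop i w).

Definition sprec := tri_op (fun m n => n < m)%N.
Definition scirc := tri_op (fun m n => m == n).
Definition ssucc := tri_op (fun m n => m < n)%N.

Definition M1 : series K := fun w => if size w == 1%N then 1 else 0.

Inductive inGenM1 : series K -> Prop :=
| genM1_M1 : inGenM1 M1
| genM1_0 : inGenM1 szero
| genM1_add x y : inGenM1 x -> inGenM1 y -> inGenM1 (sadd x y)
| genM1_scale a x : inGenM1 x -> inGenM1 (sscale a x)
| genM1_prec x y : inGenM1 x -> inGenM1 y -> inGenM1 (sprec x y)
| genM1_circ x y : inGenM1 x -> inGenM1 y -> inGenM1 (scirc x y)
| genM1_succ x y : inGenM1 x -> inGenM1 y -> inGenM1 (ssucc x y).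
End Series.

Record dendTri (K : fieldType) := DendTri {
  dt_car :> lmodType K;
  dt_prec : dt_car -> dt_car -> dt_car;
  dt_circ : dt_car -> dt_car -> dt_car;
  dt_succ : dt_car -> dt_car -> dt_car;
  dt_prec_linl : forall z, linear (dt_prec ^~ z);
  dt_prec_linr : forall z, linear (dt_prec z);
  dt_circ_linl : forall z, linear (dt_circ ^~ z);
  dt_circ_linr : forall z, linear (dt_circ z);
  dt_succ_linl : forall z, linear (dt_succ ^~ z);
  dt_succ_linr : forall z, linear (dt_succ z);
  dt_circA : forall x y z, dt_circ (dt_circ x y) z = dt_circ x (dt_circ y z);
  dt_ax1 : forall x y z, dt_prec (dt_prec x y) z
             = dt_prec x (dt_prec y z + dt_circ y z + dt_succ y z);
  dt_ax2 : forall x y z, dt_prec (dt_succ x y) z = dt_succ x (dt_prec y z);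
  dt_ax3 : forall x y z, dt_succ (dt_prec x y + dt_circ x y + dt_succ x y) z
             = dt_succ x (dt_succ y z);
  dt_ax4 : forall x y z, dt_circ (dt_succ x y) z = dt_succ x (dt_circ y z);
  dt_ax5 : forall x y z, dt_circ (dt_prec x y) z = dt_circ x (dt_succ y z);
  dt_ax6 : forall x y z, dt_prec (dt_circ x y) z = dt_circ x (dt_prec y z)
}.

(* f is a morphism of dendriform trialgebras on the subset P (assumed to be
   a sub-trialgebra) of series K, into D *)
Definition dt_morph_on (K : fieldType) (D : dendTri K)
  (P : series K -> Prop) (f : series K -> D) : Prop :=
  forall x y, P x -> P y ->
    [/\ f (sadd x y) = f x + f y,
        forall a, f (sscale a x) = a *: f x,
        f (sprec x y) = dt_prec (f x) (f y),
        f (scirc x y) = dt_circ (f x) (f y)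
      & f (ssucc x y) = dt_succ (f x) (f y)].

Definition free_dendTri_on (K : fieldType) (P : series K -> Prop)
  (g : series K) : Prop :=
  forall (D : dendTri K) (d : D),
    (exists f : series K -> D, f g = d /\ dt_morph_on P f) /\
    (forall f1 f2 : series K -> D, f1 g = d -> f2 g = d ->
       dt_morph_on P f1 -> dt_morph_on P f2 ->
       forall x, P x -> f1 x = f2 x).

(* Every iterated product of M_1 is a linear combination of the elements [teval g t] indexed
   by decorated binary trees [t]: products of two such elements are again combinations of
   them, by a rule [tprod] derived from the trialgebra axioms alone, hence valid with any
   generator [g] in any dendriform trialgebra.  In K<A>^+ with [g = M_1], [teval g t] is the
   characteristic series of the words of shape [t], the shape recording the recursive
   decomposition w = L m R at the last occurrence of the greatest letter m.  Every
   well-formed tree is the shape of some word, so these series are linearly independent,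
   and mapping [teval M_1 t] to [teval d t] is a well-defined morphism into any trialgebra;
   it is the only one sending M_1 to d, since M_1 generates. *)

From HB Require Import structures.
From mathcomp Require Import all_boot all_order all_algebra zify functions.
From Stdlib Require Import FunctionalExtensionality ClassicalEpsilon.
Import GRing.Theory.
Local Open Scope ring_scope.
Set Implicit Arguments. Unset Strict Implicit. Unset Printing Implicit Defensive.

Section LinearFun.
Variables (K : fieldType) (U V : lmodType K) (h : U -> V).
Hypothesis h_linear : linear h.

Let hL : {linear U -> V} := HB.pack h (GRing.isLinear.Build _ _ _ _ h h_linear).

Lemma linear_fun_sum I (r : seq I) (F : I -> U) :
  h (\sum_(i <- r) F i) = \sum_(i <- r) h (F i).
Proof. exact: (raddf_sum hL). Qed.

Lemma linear_funZ a x : h (a *: x) = a *: h x.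
Proof. exact: (linearZ_LR hL). Qed.
End LinearFun.

Inductive dop := Prec | Circ | Succ.

Definition dt_op (K : fieldType) (D : dendTri K) (o : dop) : D -> D -> D :=
  match o with Prec => @dt_prec K D | Circ => @dt_circ K D | Succ => @dt_succ K D end.
Arguments dt_op {K D} o.

(** * Decorated trees and their products *)

(* [Node k l r] is the shape of the words L m R where m is the last occurrence of the greatest
   letter, L has shape l, R has shape r, and k tells whether max L = m; [Leaf] is the shape of
   the empty word. *)
Inductive tree := Leaf | Node of bool & tree & tree.

Fixpoint eqtree t s := match t, s with
  | Leaf, Leaf => true
  | Node k l r, Node k' l' r' => [&& k == k', eqtree l l' & eqtree r r']
  | _, _ => false end.

Lemma eqtreeP : Equality.axiom eqtree.
Proof.
elim=> [|k l IHl r IHr] [|k' l' r'] /=; try by constructor.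
case: eqP => [<-|]; last by constructor; case.
case: IHl => [<-|]; last by constructor; case.
by case: IHr => [<-|]; constructor; [|case].
Qed.
HB.instance Definition _ := hasDecEq.Build tree eqtreeP.

Lemma eq_Node k l r k' l' r' :
  (Node k l r == Node k' l' r') = [&& k == k', l == l' & r == r'].
Proof. by []. Qed.

Definition tdot (f : dop -> seq tree) := f Prec ++ f Circ ++ f Succ.

Fixpoint tprod (t : tree) : tree -> dop -> seq tree :=
  fix tprod_t s o :=
  match o with
  | Prec => if t is Node kt t1 t2 then
      map (Node kt t1) (if t2 is Leaf then [:: s] else tdot (tprod t2 s)) else [::]
  | Circ => if s is Node ks s1 s2 then
      if s1 is Leaf then [:: Node true t s2] else
      map (fun u => Node true u s2) (tprod_t s1 (if ks then Circ else Prec)) else [::]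
  | Succ => if s is Node ks s1 s2 then
      if s1 is Leaf then [:: Node false t s2] else
      if ks then map (fun u => Node true u s2) (tprod_t s1 Succ)
      else map (fun u => Node false u s2) (tdot (tprod_t s1)) else [::]
  end.

Section TprodEquations.
Variables (kt : bool) (t1 t2 : tree) (ks : bool) (s1 s2 : tree).
Let t := Node kt t1 t2.
Let s := Node ks s1 s2.

Lemma tprod_Prec :
  tprod t s Prec = map (Node kt t1) (if t2 is Leaf then [:: s] else tdot (tprod t2 s)).
Proof. by []. Qed.

Lemma tprod_Circ : tprod t s Circ =
  if s1 is Leaf then [:: Node true t s2] else
  map (fun u => Node true u s2) (tprod t s1 (if ks then Circ else Prec)).
Proof. by case: s1 @s. Qed.

Lemma tprod_Succ : tprod t s Succ =
  if s1 is Leaf then [:: Node false t s2] else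
  if ks then map (fun u => Node true u s2) (tprod t s1 Succ)
  else map (fun u => Node false u s2) (tdot (tprod t s1)).
Proof. by case: s1 @s. Qed.
End TprodEquations.

Arguments tprod : simpl never.

Lemma all_tdot (P : pred tree) f :
  all P (tdot f) = [&& all P (f Prec), all P (f Circ) & all P (f Succ)].
Proof. by rewrite /tdot !all_cat. Qed.

Lemma tprod_nonleaf t s : t != Leaf -> s != Leaf -> all (fun u => u != Leaf) (tdot (tprod t s)).
Proof.
have allN (f : tree -> tree) l : (forall u, f u != Leaf) -> all (fun u => u != Leaf) (map f l).
  by move=> fN; rewrite all_map; apply/allP => u _; apply: fN.
case: t => [|kt t1 t2] //; case: s => [|ks s1 s2] // _ _.
rewrite all_tdot tprod_Prec tprod_Circ tprod_Succ.
by case: s1 => [|? ? ?]; case: ks; rewrite /= ?allN.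
Qed.

Fixpoint wf t := if t is Node k l r then [&& wf l, wf r & k ==> (l != Leaf)] else true.

Definition basic t := wf t && (t != Leaf).

Lemma basic_map_Nodel k r us :
  wf r -> all basic us -> all basic (map (fun u => Node k u r) us).
Proof.
move=> wr /allP bus; rewrite all_map; apply/allP => u /bus /andP[wu nu].
by rewrite /basic /= wu wr nu implybT.
Qed.

Lemma tprod_basic t s : basic t -> basic s -> all basic (tdot (tprod t s)).
Proof.
elim: t s => [//|kt t1 _ t2 IHt2] s; elim: s => [//|ks s1 IHs1 s2 _] bt bs.
have /and3P[wt1 wt2 wkt] : [&& wf t1, wf t2 & kt ==> (t1 != Leaf)] by case/andP: bt.
have /and3P[ws1 ws2 wks] : [&& wf s1, wf s2 & ks ==> (s1 != Leaf)] by case/andP: bs.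
rewrite all_tdot tprod_Prec tprod_Circ tprod_Succ; apply/andP; split.
  rewrite all_map; apply/allP => u uin /=; rewrite /basic /= wt1 wkt andbT.
  case: t2 {bt IHs1} IHt2 wt2 uin => [|k2 a2 b2] IHt2 wt2; first by rewrite inE => /eqP ->.
  have bt2 : basic (Node k2 a2 b2) by rewrite /basic wt2.
  by move=> /(allP (IHt2 _ bt2 bs)) /andP[->].
case: s1 IHs1 ws1 {wks bs} => [|k1 a1 b1] IHs1 ws1; first by rewrite /basic /= wt1 wt2 ws2 wkt.
have : all basic (tdot (tprod (Node kt t1 t2) (Node k1 a1 b1))).
  by apply: IHs1; rewrite /basic ?ws1.
rewrite all_tdot => /and3P[Hp Hc Hs].
by case: ks; apply/andP; split; apply: basic_map_Nodel; rewrite ?all_tdot ?Hp ?Hc ?Hs.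
Qed.

(** * Evaluation in a dendriform trialgebra *)

Section Evaluation.
Variables (K : fieldType) (D : dendTri K) (g : D).

Lemma dt_op_linl o (z : D) : linear (dt_op o ^~ z).
Proof. by case: o; [exact: dt_prec_linl | exact: dt_circ_linl | exact: dt_succ_linl]. Qed.

Lemma dt_op_linr o (z : D) : linear (dt_op o z).
Proof. by case: o; [exact: dt_prec_linr | exact: dt_circ_linr | exact: dt_succ_linr]. Qed.

(* [Leaf] only occurs as an absent factor: its value [0] is never used. *)
Fixpoint teval t : D :=
  if t is Node k l r then
    let p := if r is Leaf then g else dt_prec g (teval r) in
    if l is Leaf then p else if k then dt_circ (teval l) p else dt_succ (teval l) p
  else 0.

Definition gprec r := if r is Leaf then g else dt_prec g (teval r).

Definition tnode k l p :=
  if l is Leaf then p else if k then dt_circ (teval l) p else dt_succ (teval l) p.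

Lemma teval_Node k l r : teval (Node k l r) = tnode k l (gprec r).
Proof. by case: l; case: r. Qed.

#[global] Arguments teval : simpl never.

Definition tsum us := \sum_(u <- us) teval u.

Lemma tnode_linear k l : linear (tnode k l).
Proof. by case: l => [|? ? ?] a x y //; case: k; rewrite /= ?dt_circ_linr ?dt_succ_linr. Qed.

Lemma tnode_prec k l p q : dt_prec (tnode k l p) q = tnode k l (dt_prec p q).
Proof. by case: l => [|? ? ?] //; case: k; rewrite /= ?dt_ax6 ?dt_ax2. Qed.

Lemma tsum_map_Noder k l us : tsum (map (Node k l) us) = tnode k l (\sum_(u <- us) gprec u).
Proof.
rewrite /tsum big_map (linear_fun_sum (tnode_linear k l)).
by apply: eq_bigr => u _; rewrite teval_Node.
Qed.

Lemma tsum_map_Nodel k r us : all (fun u => u != Leaf) us ->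
  tsum (map (fun u => Node k u r) us) = dt_op (if k then Circ else Succ) (tsum us) (gprec r).
Proof.
move=> /allP usN; rewrite /tsum big_map.
rewrite (linear_fun_sum (dt_op_linl _ _)).
by apply: eq_big_seq => u /usN; rewrite teval_Node; case: u => //; case: k.
Qed.

Lemma gprec_sum us : all (fun u => u != Leaf) us ->
  \sum_(u <- us) gprec u = dt_prec g (tsum us).
Proof.
move=> /allP usN; rewrite /tsum (linear_fun_sum (dt_prec_linr g)).
by apply: eq_big_seq => u /usN; case: u.
Qed.

Definition tprod_spec t s := forall o, dt_op o (teval t) (teval s) = tsum (tprod t s o).

Lemma tprod_spec_dot t s : tprod_spec t s ->
  dt_prec (teval t) (teval s) + dt_circ (teval t) (teval s) + dt_succ (teval t) (teval s)
  = tsum (tdot (tprod t s)).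
Proof.
move=> H; rewrite /tsum /tdot !big_cat /= addrA.
by congr (_ + _ + _); [exact: H Prec | exact: H Circ | exact: H Succ].
Qed.

Section TprodStep.
Variables (kt : bool) (t1 t2 : tree) (ks : bool) (s1 s2 : tree).
Let t := Node kt t1 t2.
Let s := Node ks s1 s2.

Lemma teval_tprod_Prec : (t2 != Leaf -> tprod_spec t2 s) ->
  dt_prec (teval t) (teval s) = tsum (tprod t s Prec).
Proof.
move=> IH; rewrite tprod_Prec tsum_map_Noder teval_Node tnode_prec; congr (tnode _ _ _).
case: t2 @t IH => [|k2 a2 b2] t' IH; first by rewrite big_seq1.
by rewrite gprec_sum ?tprod_nonleaf //= dt_ax1 tprod_spec_dot //; apply: IH.
Qed.

Lemma teval_tprod_Circ : (s1 != Leaf -> tprod_spec t s1) ->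
  dt_circ (teval t) (teval s) = tsum (tprod t s Circ).
Proof.
move=> IH; rewrite tprod_Circ.
case: s1 @s IH => [|k1 a1 b1] s' IH; first by rewrite /tsum big_seq1 !teval_Node.
have := tprod_nonleaf (isT : t != Leaf) (isT : Node k1 a1 b1 != Leaf).
rewrite all_tdot => /and3P[nP nC _].
rewrite tsum_map_Nodel; last by case: ks.
rewrite /s' teval_Node; case: ks => /=; rewrite -?dt_circA -?dt_ax5; congr (dt_circ _ _).
  exact: (IH isT Circ).
exact: (IH isT Prec).
Qed.

Lemma teval_tprod_Succ : (s1 != Leaf -> tprod_spec t s1) ->
  dt_succ (teval t) (teval s) = tsum (tprod t s Succ).
Proof.
move=> IH; rewrite tprod_Succ.
case: s1 @s IH => [|k1 a1 b1] s' IH; first by rewrite /tsum big_seq1 !teval_Node.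
have nt := tprod_nonleaf (isT : t != Leaf) (isT : Node k1 a1 b1 != Leaf).
rewrite /s' teval_Node; case: ks => /=.
  rewrite tsum_map_Nodel -?dt_ax4; last by move: nt; rewrite all_tdot => /and3P[].
  congr (dt_circ _ _); exact: (IH isT Succ).
by rewrite tsum_map_Nodel // -dt_ax3 tprod_spec_dot //; apply: IH.
Qed.

End TprodStep.

Lemma teval_tprod t s : t != Leaf -> s != Leaf -> tprod_spec t s.
Proof.
elim: t s => [//|kt t1 _ t2 IHt2] s _; elim: s => [//|ks s1 IHs1 s2 _] _ [].
- by apply: teval_tprod_Prec => nt2; apply: IHt2.
- by apply: teval_tprod_Circ => ns1; apply: IHs1.
- by apply: teval_tprod_Succ => ns1; apply: IHs1.
Qed.

Definition ceval (c : seq (K * tree)) : D := \sum_(p <- c) p.1 *: teval p.2.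

Lemma ceval_cat c1 c2 : ceval (c1 ++ c2) = ceval c1 + ceval c2.
Proof. by rewrite /ceval big_cat. Qed.

Lemma ceval_scale a c : ceval [seq (a * p.1, p.2) | p <- c] = a *: ceval c.
Proof. by rewrite /ceval big_map scaler_sumr; apply: eq_bigr => p _; rewrite scalerA. Qed.

Definition coef (c : seq (K * tree)) t := \sum_(p <- c | p.2 == t) p.1.

Lemma ceval_coef c (S : seq tree) : uniq S -> {subset map snd c <= S} ->
  ceval c = \sum_(t <- S) coef c t *: teval t.
Proof.
move=> uS sub; rewrite /coef; under eq_bigr do rewrite scaler_suml.
rewrite (exchange_big_dep xpredT) //= /ceval; apply: eq_big_seq => p pin.
rewrite big_mkcond (bigD1_seq p.2) ?sub ?map_f //= eqxx big1 ?addr0 // => t tp.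
by rewrite eq_sym (negbTE tp).
Qed.

Lemma ceval_gen : ceval [:: (1, Node false Leaf Leaf)] = g.
Proof. by rewrite /ceval big_seq1 scale1r. Qed.

Definition cprod o (c1 c2 : seq (K * tree)) :=
  flatten [seq [seq (p.1 * q.1, u) | u <- tprod p.2 q.2 o] | p <- c1, q <- c2].

Lemma ceval_cprod o c1 c2 :
  all (fun p => p.2 != Leaf) c1 -> all (fun p => p.2 != Leaf) c2 ->
  dt_op o (ceval c1) (ceval c2) = ceval (cprod o c1 c2).
Proof.
move=> /allP n1 /allP n2.
rewrite /ceval /cprod big_flatten big_allpairs_dep (linear_fun_sum (dt_op_linl _ _)).
apply: eq_big_seq => p /n1 np; rewrite (linear_funZ (dt_op_linl _ _)).
rewrite (linear_fun_sum (dt_op_linr _ _)) scaler_sumr; apply: eq_big_seq => q /n2 nq.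
rewrite (linear_funZ (dt_op_linr _ _)) teval_tprod // /tsum big_map !scaler_sumr.
by apply: eq_bigr => u _; rewrite scalerA.
Qed.
End Evaluation.

(** * The dendriform trialgebra of series *)

Lemma maxw_cat (s1 s2 : seq nat) : maxw (s1 ++ s2) = maxn (maxw s1) (maxw s2).
Proof. by elim: s1 => [|a s IH] /=; rewrite ?max0n // IH maxnA. Qed.

Section SeriesTrialgebra.
Variable K : fieldType.

Lemma big_nat_cond_indicator (m n N : nat) (P : pred nat) (F : nat -> K) : (n <= N)%N ->
  \sum_(m <= i < n | P i) F i = \sum_(0 <= i < N) ((m <= i) && (i < n) && P i)%N%:R * F i.
Proof.
move=> nN; rewrite (big_nat_widen _ _ _ _ _ nN) (big_nat_widenl _ _ _ _ _ (leq0n m)) big_mkcond.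
by apply: eq_bigr => i _; case: (P i); case: (i < n)%N; case: (m <= i)%N; rewrite ?mul1r ?mul0r.
Qed.

Definition tri3 (phi : nat -> nat -> nat -> bool) (f g h : series K) (w : seq nat) :=
  \sum_(0 <= i < size w) \sum_(0 <= j < size w)
    ((0 < j) && (j < i) && phi (maxw (take j w)) (maxw (drop j (take i w))) (maxw (drop i w)))%N%:R
    * (f (take j w) * g (drop j (take i w)) * h (drop i w)).

Lemma tri_op_tri_opl c1 c2 f g h w :
  tri_op c2 (tri_op c1 f g) h w = tri3 (fun a b c => c1 a b && c2 (maxn a b) c) f g h w.
Proof.
rewrite /tri_op /tri3 (@big_nat_cond_indicator _ _ _ _ _ (leqnn _)).
apply: eq_big_nat => i /andP[_ iw].
rewrite (@big_nat_cond_indicator _ _ (size w)); last by rewrite size_takel ltnW.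
rewrite mulr_suml mulr_sumr; apply: eq_bigr => j _.
rewrite size_takel ?(ltnW iw) //.
case: (boolP ((0 < j) && (j < i))%N) => [/andP[j0 ji]|]; last first.
  by case: (0 < j)%N; case: (j < i)%N; rewrite //= !mul0r ?mulr0.
rewrite take_takel ?(ltnW ji) //=.
have -> : maxw (take i w) = maxn (maxw (take j w)) (maxw (drop j (take i w))).
  by rewrite -maxw_cat -{1}(cat_take_drop j (take i w)) take_takel // ltnW.
rewrite iw (leq_ltn_trans (leq0n j) ji) /=.
by case: (c1 _ _); case: (c2 _ _); rewrite /= ?mul1r ?mul0r ?mulrA.
Qed.

Lemma tri_op_tri_opr c1 c2 f g h w :
  tri_op c2 f (tri_op c1 g h) w = tri3 (fun a b c => c2 a (maxn b c) && c1 b c) f g h w.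
Proof.
rewrite /tri_op /tri3 (@big_nat_cond_indicator _ _ _ _ _ (leqnn _)) [RHS]exchange_big /=.
apply: eq_big_nat => j /andP[_ jw].
rewrite size_drop.
rewrite (eq_big (fun k => c1 (maxw (drop j (take (k + j) w))) (maxw (drop (k + j) w)))
   (fun k => g (drop j (take (k + j) w)) * h (drop (k + j) w))); first last.
- by move=> k _; rewrite take_drop drop_drop.
- by move=> k; rewrite take_drop drop_drop.
rewrite -(big_addn 1 (size w) j (fun i => c1 (maxw (drop j (take i w))) (maxw (drop i w)))
   (fun i => g (drop j (take i w)) * h (drop i w))).
rewrite (@big_nat_cond_indicator _ _ (size w)) // mulr_sumr mulr_sumr.
apply: eq_big_nat => i /andP[_ iw].
case: (boolP ((0 < j) && (j < i))%N) => [/andP[j0 ji]|]; last first.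
  by rewrite add1n; case: (0 < j)%N; case: (j < i)%N; rewrite //= ?mul0r ?mulr0 ?andbF.
have -> : maxw (drop j w) = maxn (maxw (drop j (take i w))) (maxw (drop i w)).
  by rewrite -maxw_cat -{1}(cat_take_drop i w) drop_cat size_takel ?(ltnW iw) // ji.
rewrite add1n ji iw j0 jw /=.
by case: (c1 _ _); case: (c2 _ _); rewrite /= ?mul1r ?mul0r ?mulr0 ?mulrA.
Qed.

Lemma eq_tri3 (p q : nat -> nat -> nat -> bool) f g h w :
  (forall a b c, p a b c = q a b c) -> tri3 p f g h w = tri3 q f g h w.
Proof. by move=> pq; apply: eq_bigr => i _; apply: eq_bigr => j _; rewrite pq. Qed.

Lemma tri3_add3 (p1 p2 p3 q : nat -> nat -> nat -> bool) f g h w :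
  (forall a b c, (p1 a b c + p2 a b c + p3 a b c)%N = q a b c :> nat) ->
  tri3 p1 f g h w + tri3 p2 f g h w + tri3 p3 f g h w = tri3 q f g h w.
Proof.
move=> pq; rewrite /tri3 -!big_split /=; apply: eq_bigr => i _.
rewrite -!big_split /=; apply: eq_bigr => j _.
rewrite -!mulrDl -!natrD; congr (_%:R * _).
have := pq (maxw (take j w)) (maxw (drop j (take i w))) (maxw (drop i w)).
by case: ((0 < j) && (j < i))%N.
Qed.

Definition series_lmod : lmodType K := (seq nat -> K^o : lmodType K).

Lemma series_lmodE (x y : series_lmod) a w : (a *: x + y) w = a * x w + y w.
Proof. by []. Qed.

Lemma tri_op_linl c (z : series_lmod) :
  linear (fun x : series_lmod => @tri_op K c x z : series_lmod).
Proof.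
move=> a u v; apply: functional_extensionality => w /=.
rewrite series_lmodE /tri_op mulr_sumr -big_split /=; apply: eq_bigr => i _.
by rewrite series_lmodE mulrDl mulrA.
Qed.

Lemma tri_op_linr c (z : series_lmod) :
  linear (fun x : series_lmod => @tri_op K c z x : series_lmod).
Proof.
move=> a u v; apply: functional_extensionality => w /=.
rewrite series_lmodE /tri_op mulr_sumr -big_split /=; apply: eq_bigr => i _.
by rewrite series_lmodE mulrDr !mulrA [a * _]mulrC.
Qed.

Lemma tri_opDl c (x y z : series_lmod) w :
  @tri_op K c (x + y) z w = @tri_op K c x z w + @tri_op K c y z w.
Proof. by have := tri_op_linl c z 1 x y; rewrite !scale1r => ->. Qed.

Lemma tri_opDr c (x y z : series_lmod) w :
  @tri_op K c z (x + y) w = @tri_op K c z x w + @tri_op K c z y w.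
Proof. by have := tri_op_linr c z 1 x y; rewrite !scale1r => ->. Qed.

Section SeriesAxioms.
Variables x y z : series_lmod.
Let sP (x y : series_lmod) : series_lmod := @sprec K x y.
Let sC (x y : series_lmod) : series_lmod := @scirc K x y.
Let sS (x y : series_lmod) : series_lmod := @ssucc K x y.

Lemma series_circA : sC (sC x y) z = sC x (sC y z).
Proof.
apply: functional_extensionality => w; rewrite /sC /scirc tri_op_tri_opl tri_op_tri_opr.
by apply: eq_tri3 => a b c; apply/idP/idP; lia.
Qed.

Lemma series_ax1 : sP (sP x y) z = sP x (sP y z + sC y z + sS y z).
Proof.
apply: functional_extensionality => w.
rewrite /sP /sC /sS /sprec /scirc /ssucc tri_op_tri_opl !tri_opDr !tri_op_tri_opr.
by symmetry; apply: tri3_add3 => a b c; lia.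
Qed.

Lemma series_ax2 : sP (sS x y) z = sS x (sP y z).
Proof.
apply: functional_extensionality => w; rewrite /sP /sS /sprec /ssucc tri_op_tri_opl tri_op_tri_opr.
by apply: eq_tri3 => a b c; apply/idP/idP; lia.
Qed.

Lemma series_ax3 : sS (sP x y + sC x y + sS x y) z = sS x (sS y z).
Proof.
apply: functional_extensionality => w.
rewrite /sP /sC /sS /sprec /scirc /ssucc !tri_opDl !tri_op_tri_opl tri_op_tri_opr.
by apply: tri3_add3 => a b c; lia.
Qed.

Lemma series_ax4 : sC (sS x y) z = sS x (sC y z).
Proof.
apply: functional_extensionality => w; rewrite /sC /sS /scirc /ssucc tri_op_tri_opl tri_op_tri_opr.
by apply: eq_tri3 => a b c; apply/idP/idP; lia.
Qed.

Lemma series_ax5 : sC (sP x y) z = sC x (sS y z).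
Proof.
apply: functional_extensionality => w.
rewrite /sP /sC /sS /scirc /ssucc /sprec tri_op_tri_opl tri_op_tri_opr.
by apply: eq_tri3 => a b c; apply/idP/idP; lia.
Qed.

Lemma series_ax6 : sP (sC x y) z = sC x (sP y z).
Proof.
apply: functional_extensionality => w; rewrite /sP /sC /scirc /sprec tri_op_tri_opl tri_op_tri_opr.
by apply: eq_tri3 => a b c; apply/idP/idP; lia.
Qed.
End SeriesAxioms.

Definition series_dendTri : dendTri K :=
  @DendTri K series_lmod (@sprec K) (@scirc K) (@ssucc K)
  (fun z => tri_op_linl _ z) (fun z => tri_op_linr _ z)
  (fun z => tri_op_linl _ z) (fun z => tri_op_linr _ z)
  (fun z => tri_op_linl _ z) (fun z => tri_op_linr _ z)
  series_circA series_ax1 series_ax2 series_ax3 series_ax4 series_ax5 series_ax6.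
End SeriesTrialgebra.

(** * Shapes of words *)

(* The decomposition tree of a word, labelled by the maxima, built by inserting letters from
   the right. *)
Inductive ctree := CLeaf | CNode of nat & bool & ctree & ctree.

Fixpoint ccons (a : nat) t := match t with
  | CLeaf => CNode a false CLeaf CLeaf
  | CNode m k l r =>
      if (m < a)%N then CNode a false CLeaf t
      else if a == m then CNode m true (ccons a l) r
      else CNode m (if l is CLeaf then false else k) (ccons a l) r
  end.

Fixpoint unlabel t := if t is CNode _ k l r then Node k (unlabel l) (unlabel r) else Leaf.

Definition ctree_of (w : seq nat) := foldr ccons CLeaf w.

Definition shape w := unlabel (ctree_of w).

Definition croot t := if t is CNode m _ _ _ then m else 0%N.

Lemma ccons_neq_CLeaf a t : ccons a t <> CLeaf.
Proof. by case: t => //= m k l r; case: ifP => //; case: ifP. Qed.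

Lemma croot_ctree_of w : croot (ctree_of w) = maxw w.
Proof.
elim: w => //= a w IH; case E: (ctree_of w) => [|m k l r] /=; rewrite E /= in IH.
  by rewrite -IH maxn0.
case: ifP => [h|h]; first by rewrite -IH /=; lia.
by case: ifP => [/eqP h2|h2] /=; rewrite -IH /=; lia.
Qed.

Lemma shape_eq_Leaf w : (shape w == Leaf) = (w == [::]).
Proof.
case: w => // a w; rewrite /shape /=.
by case E: (ccons a (ctree_of w)) => //; case: (ccons_neq_CLeaf E).
Qed.

Lemma maxw_leq (s : seq nat) x : (maxw s <= x)%N = all (fun b => b <= x)%N s.
Proof. by elim: s => //= a s IH; rewrite geq_max IH. Qed.

Lemma maxw_ltn (s : seq nat) x : s != [::] -> (maxw s < x)%N = all (fun b => b < x)%N s.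
Proof.
elim: s => //= a s IH _; case: s IH => [|b s] IH /=; first by rewrite andbT maxn0.
by rewrite gtn_max IH.
Qed.

Lemma maxw_cons_top m R : all (fun b => b < m)%N R -> maxw (m :: R) = m.
Proof.
move=> h /=; case: R h => [|b R] h; first by rewrite maxn0.
by move: h; rewrite -maxw_ltn // => h; lia.
Qed.

Lemma foldr_ccons_CNode m L T : all (fun b => b <= m)%N L ->
  foldr ccons (CNode m false CLeaf T) L = CNode m ((L != [::]) && (maxw L == m)) (ctree_of L) T.
Proof.
elim: L => //= a L IH /andP[am aL]; rewrite IH //= ltnNge am /=.
have Lm : (maxw L <= m)%N by rewrite maxw_leq.
case: eqP => [->|/eqP ne]; first by congr CNode; apply/esym/eqP; lia.
congr CNode; case: L IH aL Lm => [|b L] IH aL Lm /=.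
  by apply/esym/eqP; move: ne; rewrite maxn0; lia.
case E: (ctree_of (b :: L)) => [|? ? ? ?]; first by case: (ccons_neq_CLeaf E).
by move: E Lm; rewrite /ctree_of /= => -> /= Lm; apply/eqP/eqP; lia.
Qed.

Lemma shape_split L m R : all (fun b => b <= m)%N L -> all (fun b => b < m)%N R ->
  shape (L ++ m :: R) = Node ((L != [::]) && (maxw L == m)) (shape L) (shape R).
Proof.
move=> HL HR; rewrite /shape /ctree_of foldr_cat /=.
have -> : ccons m (foldr ccons CLeaf R) = CNode m false CLeaf (ctree_of R).
  case: R HR => [|b R] HR //=.
  have := croot_ctree_of (b :: R); rewrite /ctree_of /=.
  case E: (ccons b (foldr ccons CLeaf R)) => [|m' k l r] /=; first by case: (ccons_neq_CLeaf E).
  move=> hm; have lt : (m' < m)%N.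
    by rewrite hm; have := maxw_ltn m (isT : b :: R != [::]); rewrite /= => ->.
  by rewrite /= lt.
by rewrite (foldr_ccons_CNode (ctree_of R) HL).
Qed.

Lemma last_max_split w : w != [::] -> exists L m R,
  [/\ w = L ++ m :: R, all (fun b => b <= m)%N L & all (fun b => b < m)%N R].
Proof.
elim: w => //= a w IH _; case: w IH => [|b w] IH; first by exists [::], a, [::].
case: (IH isT) => L [m [R [E HL HR]]].
case: (ltnP m a) => am; last by exists (a :: L), m, R; rewrite E /= am.
exists [::], a, (b :: w); split => //; rewrite E all_cat /=; apply/and3P; split => //.
- by apply/allP => x /(allP HL) xm; lia.
- by apply/allP => x /(allP HR) xm; lia.
Qed.

Lemma last_max_split_size L1 m1 R1 L2 m2 R2 : L1 ++ m1 :: R1 = L2 ++ m2 :: R2 ->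
  all (fun b => b < m1)%N R1 -> all (fun b => b <= m2)%N L2 -> (size L2 <= size L1)%N.
Proof.
move=> E HR1 HL2; rewrite leqNgt; apply/negP => lt.
have m1_le_m2 : (m1 <= m2)%N.
  have <- : nth 0%N L2 (size L1) = m1.
    by move: (congr1 (nth 0%N ^~ (size L1)) E); rewrite /= !nth_cat ltnn subnn lt.
  by apply: (allP HL2); rewrite mem_nth.
have m2_lt_m1 : (m2 < m1)%N.
  have e2 : nth 0%N (m1 :: R1) (size L2 - size L1) = m2.
    by move: (congr1 (nth 0%N ^~ (size L2)) E); rewrite /= !nth_cat ltnn subnn ltnNge (ltnW lt).
  have hsz : ((size L2 - size L1).-1 < size R1)%N.
    by have := congr1 size E; rewrite !size_cat /=; lia.
  move: e2 hsz; rewrite -subn_gt0 in lt; case: (size L2 - size L1)%N lt => [//|k] _ /= <- hk.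
  by apply: (allP HR1); rewrite mem_nth.
lia.
Qed.

Lemma shape_cons_top a v r :
  (shape (a :: v) == Node false Leaf r) = all (fun b => b < a)%N v && (shape v == r).
Proof.
case: (boolP (all (fun b => b < a)%N v)) => h /=; first by rewrite -[a :: v]cat0s shape_split.
apply/negbTE; case: (last_max_split (isT : a :: v != [::])) => L [m [R [E HL HR]]].
rewrite E shape_split // eq_Node; apply/negP => /and3P[_ /eqP sL _].
move/eqP: sL; rewrite shape_eq_Leaf => /eqP L0; move: E h; rewrite L0 /= => -[-> ->].
by rewrite HR.
Qed.

Definition node_cmp (k : bool) (m n : nat) := if k then m == n else (m < n)%N.

Definition node_split k l r (w : seq nat) i :=
  [&& node_cmp k (maxw (take i w)) (maxw (drop i w)), shape (take i w) == l
    & shape (drop i w) == Node false Leaf r].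

Lemma node_splitP k l r w i : l != Leaf -> node_split k l r w i ->
  exists m R, [/\ drop i w = m :: R, all (fun b => b <= m)%N (take i w),
     all (fun b => b < m)%N R, (i < size w)%N & shape w == Node k l r].
Proof.
move=> nl /and3P[hc /eqP hl]; case E: (drop i w) => [|m R] //.
rewrite shape_cons_top => /andP[HR /eqP hr]; rewrite E in hc.
have iw : (i < size w)%N by have := congr1 size E; rewrite size_drop /=; lia.
have HL : all (fun b => b <= m)%N (take i w).
  by rewrite -maxw_leq; move: hc; rewrite maxw_cons_top // /node_cmp; case: k => [/eqP ->|/ltnW].
exists m, R; split => //.
rewrite -(cat_take_drop i w) E shape_split // hl hr eq_Node !eqxx !andbT.
have Ln : take i w != [::] by rewrite -shape_eq_Leaf hl.
rewrite Ln /=; move: hc; rewrite maxw_cons_top // /node_cmp.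
by case: k => [->|h] //; apply/eqP/negbTE; rewrite neq_ltn h.
Qed.

Lemma has_node_split k l r w : l != Leaf -> wf (Node k l r) ->
  has (node_split k l r w) (index_iota 1 (size w)) = (shape w == Node k l r).
Proof.
move=> nl Wt; apply/idP/idP; first by case/hasP => i _ /(node_splitP nl) [m [R [_ _ _ _ ->]]].
move=> hs; have wn : w != [::] by rewrite -shape_eq_Leaf; apply: contraTN hs => /eqP ->.
case: (last_max_split wn) => L [m [R [E HL HR]]].
move: hs; rewrite E shape_split // eq_Node => /and3P[/eqP hk /eqP hl /eqP hr].
have Ln : L != [::] by rewrite -shape_eq_Leaf hl.
apply/hasP; exists (size L).
  by rewrite mem_index_iota size_cat /= addnS ltnS leq_addr andbT lt0n size_eq0.
rewrite /node_split take_size_cat // drop_size_cat // maxw_cons_top // hl shape_cons_top HR hr.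
rewrite /node_cmp -hk Ln /= !eqxx !andbT.
by case: eqP => // /eqP ne; rewrite ltn_neqAle ne maxw_leq.
Qed.

Lemma node_split_uniq k l r w : l != Leaf ->
  forall i j, node_split k l r w i -> node_split k l r w j -> i = j.
Proof.
move=> nl i j /(node_splitP nl) [m1 [R1 [E1 L1 H1 i1 _]]].
move=> /(node_splitP nl) [m2 [R2 [E2 L2 H2 j2 _]]].
have E : take i w ++ m1 :: R1 = take j w ++ m2 :: R2 by rewrite -E1 -E2 !cat_take_drop.
have := last_max_split_size E H1 L2; have := last_max_split_size (esym E) H2 L1.
rewrite (size_takel (ltnW i1)) (size_takel (ltnW j2)) => ij ji.
by apply/eqP; rewrite eqn_leq ij ji.
Qed.

Fixpoint depth t := match t with
  | Leaf => 0%N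
  | Node false l r => (maxn (depth l) (depth r)).+1
  | Node true l r => maxn (depth l) (depth r).+1
  end.

Fixpoint word_of t (m : nat) := match t with
  | Leaf => [::]
  | Node false l r => word_of l m.-1 ++ m :: word_of r m.-1
  | Node true l r => word_of l m ++ m :: word_of r m.-1
  end.

Lemma all_leq_pred_ltn (s : seq nat) m : (0 < m)%N ->
  all (fun b => b <= m.-1)%N s -> all (fun b => b < m)%N s.
Proof. by move=> m0; apply: sub_all => b /= h; apply: leq_ltn_trans h _; rewrite ltn_predL. Qed.

Lemma all_leq_pred (s : seq nat) m : all (fun b => b <= m.-1)%N s -> all (fun b => b <= m)%N s.
Proof. by apply: sub_all => b /= h; apply: leq_trans h (leq_pred m). Qed.

Lemma word_ofP t m : wf t -> (depth t <= m)%N ->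
  [/\ shape (word_of t m) = t, all (fun b => b <= m)%N (word_of t m)
    & t != Leaf -> maxw (word_of t m) = m].
Proof.
elim: t m => [//|k l IHl r IHr] m /and3P[wl wr wk] hm.
have hrm : (depth r < m)%N by move: hm; case: (k) => /=; lia.
have m0 : (0 < m)%N by lia.
have hr : (depth r <= m.-1)%N by lia.
have [sr ar _] := IHr m.-1 wr hr.
have Rm := all_leq_pred_ltn m0 ar.
case: k wk hm => wk hm /=.
  have [sl al ml] := IHl m wl (leq_trans (leq_maxl _ _) hm).
  have Ln : word_of l m != [::] by rewrite -shape_eq_Leaf sl.
  rewrite shape_split // sl sr Ln (ml wk) eqxx all_cat al /= leqnn (all_leq_pred ar).
  by split=> // _; rewrite maxw_cat maxw_cons_top // (ml wk) maxnn.
have hl : (depth l <= m.-1)%N by move: hm => /=; lia.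
have [sl al _] := IHl m.-1 wl hl.
have lt : (maxw (word_of l m.-1) < m)%N.
  by apply: (@leq_ltn_trans m.-1); [rewrite maxw_leq | rewrite ltn_predL].
rewrite shape_split ?(all_leq_pred al) // sl sr (ltn_eqF lt) andbF.
rewrite all_cat (all_leq_pred al) /= leqnn (all_leq_pred ar).
by split=> // _; rewrite maxw_cat maxw_cons_top //; apply/maxn_idPr/ltnW.
Qed.

Section ShapeIndicators.
Variable K : fieldType.
Local Notation tevalM := (@teval K (series_dendTri K) (M1 K)).
Local Notation gprecM := (@gprec K (series_dendTri K) (M1 K)).

Lemma sprec_M1 (X : series K) w : sprec (M1 K) X w =
  if w is a :: v then if v is [::] then 0 else (maxw v < a)%N%:R * X v else 0.
Proof.
rewrite /sprec /tri_op; case: w => [|a [|b v]]; rewrite ?big_nil //.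
rewrite big_mkcond big_ltn //= big_nat_cond big1 ?addr0.
  by rewrite /M1 /= maxn0; case: ifP; rewrite ?mul1r ?mul0r.
move=> i /andP[/andP[hi hn] _]; case: ifP => // _.
by rewrite /M1 size_takel ?(ltnW hn) //; case: eqP => [h|]; [move: hi; rewrite h | rewrite mul0r].
Qed.

Lemma sum_indicator_uniq (s : seq nat) (b : pred nat) : uniq s ->
  (forall i j, b i -> b j -> i = j) -> \sum_(i <- s) (b i)%:R = (has b s)%:R :> K.
Proof.
move=> us bu; elim: s us => [|i s IH] /=; first by rewrite big_nil.
case/andP=> iS us; rewrite big_cons IH //.
case: (boolP (b i)) => bi /=; last by rewrite add0r.
case: (boolP (has b s)) => [/hasP[j js bj]|_]; last by rewrite addr0.
by move: iS; rewrite (bu _ _ bi bj) js.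
Qed.

Lemma tri_op_shape k l r w : l != Leaf -> wf (Node k l r) ->
  (forall w, tevalM l w = (shape w == l)%:R) ->
  (forall w, gprecM r w = (shape w == Node false Leaf r)%:R) ->
  tri_op (node_cmp k) (tevalM l) (gprecM r) w = (shape w == Node k l r)%:R.
Proof.
move=> nl Wt Hl Hr; rewrite /tri_op big_mkcond -(has_node_split w nl Wt).
rewrite -sum_indicator_uniq ?iota_uniq //; last exact: node_split_uniq.
apply: eq_bigr => i _; rewrite /node_split Hl Hr.
by case: (node_cmp _ _ _); rewrite /= -?natrM ?mulnb.
Qed.

Lemma teval_M1 t : wf t ->
  (t != Leaf -> forall w, tevalM t w = (shape w == t)%:R) /\
  (forall w, gprecM t w = (shape w == Node false Leaf t)%:R).
Proof.
elim: t => [|k l IHl r IHr] Wt.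
  split=> // -[|a [|b v]] //; rewrite /M1 /= ?shape_cons_top //.
  by rewrite shape_eq_Leaf andbF.
have /and3P[wl wr wk] := Wt.
have [Hl _] := IHl wl; have [_ Hr] := IHr wr.
have HN w : tevalM (Node k l r) w = (shape w == Node k l r)%:R.
  rewrite teval_Node; case: l {IHl} wl wk Hl Wt => [|k1 a1 b1] wl wk Hl Wt.
    by case: k wk Wt => // _ _; exact: Hr.
  by case: k wk Wt => _ Wt; rewrite -(tri_op_shape w _ Wt (Hl isT) Hr).
split=> // w; rewrite [gprecM _ w]/= sprec_M1; case: w => [|a [|b v]] //.
by rewrite HN shape_cons_top -maxw_ltn // -natrM mulnb.
Qed.

End ShapeIndicators.

(** * Freeness *)

Definition basic_comb (K : fieldType) (c : seq (K * tree)) := all (fun p => basic p.2) c.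

Lemma basic_comb_cat (K : fieldType) (c1 c2 : seq (K * tree)) :
  basic_comb (c1 ++ c2) = basic_comb c1 && basic_comb c2.
Proof. exact: all_cat. Qed.

Lemma basic_comb_scale (K : fieldType) a (c : seq (K * tree)) :
  basic_comb [seq (a * p.1, p.2) | p <- c] = basic_comb c.
Proof. exact: all_map. Qed.

Lemma basic_comb_nonleaf (K : fieldType) (c : seq (K * tree)) :
  basic_comb c -> all (fun p => p.2 != Leaf) c.
Proof. by apply: sub_all => p /andP[]. Qed.

Lemma basic_comb_cprod (K : fieldType) o (c1 c2 : seq (K * tree)) :
  basic_comb c1 -> basic_comb c2 -> basic_comb (cprod o c1 c2).
Proof.
move=> /allP b1 /allP b2; apply/allP => x /flattenP [l /allpairsPdep [p [q [pin qin ->]]]].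
move=> /mapP [u uin ->]; apply: (allP (tprod_basic (b1 p pin) (b2 q qin))).
by rewrite /tdot !mem_cat; case: o uin => ->; rewrite ?orbT.
Qed.

Section Extension.
Variable K : fieldType.
Local Notation cevalM := (@ceval K (series_dendTri K) (M1 K)).

Lemma cevalM_word_of c u : basic_comb c -> basic u -> cevalM c (word_of u (depth u)) = coef c u.
Proof.
move=> bc /andP[wu nu]; have [su _ _] := word_ofP wu (leqnn _).
rewrite /ceval fct_sumE /coef [RHS]big_mkcond; apply: eq_big_seq => p pin.
have /andP[wp np] := allP bc p pin; have [H _] := teval_M1 K wp.
rewrite scalrfctE /= (H np) su eq_sym.
by case: eqP => _; rewrite ?mulr1n ?scaler0 //; exact: mulr1.
Qed.

Lemma inGenM1_ceval (x : series K) : inGenM1 x -> exists2 c, basic_comb c & x = cevalM c.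
Proof.
elim=> [|| x1 y1 _ [c1 b1 ->] _ [c2 b2 ->] | a x1 _ [c1 b1 ->]
       | x1 y1 _ [c1 b1 ->] _ [c2 b2 ->] | x1 y1 _ [c1 b1 ->] _ [c2 b2 ->]
       | x1 y1 _ [c1 b1 ->] _ [c2 b2 ->]].
- by exists [:: (1, Node false Leaf Leaf)]; rewrite ?ceval_gen.
- by exists [::]; rewrite // /ceval big_nil.
- by exists (c1 ++ c2); rewrite ?ceval_cat // basic_comb_cat b1.
- by exists [seq (a * p.1, p.2) | p <- c1]; rewrite ?ceval_scale // basic_comb_scale.
- by exists (cprod Prec c1 c2); rewrite -?ceval_cprod ?basic_comb_nonleaf ?basic_comb_cprod.
- by exists (cprod Circ c1 c2); rewrite -?ceval_cprod ?basic_comb_nonleaf ?basic_comb_cprod.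
- by exists (cprod Succ c1 c2); rewrite -?ceval_cprod ?basic_comb_nonleaf ?basic_comb_cprod.
Qed.

Variables (D : dendTri K) (d : D).

Lemma ceval_eq_of_cevalM c1 c2 : basic_comb c1 -> basic_comb c2 ->
  cevalM c1 = cevalM c2 -> ceval d c1 = ceval d c2.
Proof.
move=> b1 b2 E; set S := undup (map snd (c1 ++ c2)).
have uS : uniq S by exact: undup_uniq.
rewrite (ceval_coef d uS); last by move=> t ti; rewrite mem_undup map_cat mem_cat ti.
rewrite (ceval_coef d uS); last by move=> t ti; rewrite mem_undup map_cat mem_cat ti orbT.
apply: eq_big_seq => t; rewrite mem_undup => /mapP [p pin ->]; congr (_ *: _).
have bp : basic p.2 by move: pin; rewrite mem_cat => /orP[/(allP b1)|/(allP b2)].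
by rewrite -!cevalM_word_of // E.
Qed.

Definition dt_extend (x : series K) : D :=
  ceval d (epsilon (inhabits [::]) (fun c => basic_comb c /\ x = cevalM c)).

Lemma dt_extend_ceval c : basic_comb c -> dt_extend (cevalM c) = ceval d c.
Proof.
move=> bc; have ex : exists c', basic_comb c' /\ cevalM c = cevalM c' by exists c.
have [bc' e] := epsilon_spec (inhabits [::]) _ ex.
by apply: ceval_eq_of_cevalM.
Qed.

Lemma dt_extend_M1 : dt_extend (M1 K) = d.
Proof. by rewrite -{1}(@ceval_gen K (series_dendTri K) (M1 K)) dt_extend_ceval ?ceval_gen. Qed.

Lemma dt_extend_op o c1 c2 : basic_comb c1 -> basic_comb c2 ->
  dt_extend (dt_op o (cevalM c1) (cevalM c2)) = dt_op o (ceval d c1) (ceval d c2).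
Proof.
move=> b1 b2; rewrite !ceval_cprod ?basic_comb_nonleaf // dt_extend_ceval //.
exact: basic_comb_cprod.
Qed.

Lemma dt_extend_morph : dt_morph_on (@inGenM1 K) dt_extend.
Proof.
move=> x y /inGenM1_ceval [c1 b1 ->] /inGenM1_ceval [c2 b2 ->].
rewrite !dt_extend_ceval //; split.
- rewrite -[sadd _ _]/(cevalM c1 + cevalM c2) -ceval_cat dt_extend_ceval ?ceval_cat //.
  by rewrite basic_comb_cat b1.
- move=> a; rewrite -[sscale _ _]/(a *: cevalM c1) -ceval_scale dt_extend_ceval ?ceval_scale //.
  by rewrite basic_comb_scale.
- exact: (dt_extend_op Prec b1 b2).
- exact: (dt_extend_op Circ b1 b2).
- exact: (dt_extend_op Succ b1 b2).
Qed.
End Extension.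

Lemma dt_morph_on_szero (K : fieldType) (D : dendTri K) (f : series K -> D) :
  dt_morph_on (@inGenM1 K) f -> f (szero K) = 0.
Proof.
move=> hf; have [fD _ _ _ _] := hf _ _ (genM1_0 K) (genM1_0 K).
have E : sadd (szero K) (szero K) = szero K.
  by apply: functional_extensionality => w; rewrite /sadd /szero addr0.
by rewrite E in fD; apply/esym/(addrI (f (szero K))); rewrite -fD addr0.
Qed.

Lemma dt_morph_on_unique (K : fieldType) (D : dendTri K) (f1 f2 : series K -> D) :
  f1 (M1 K) = f2 (M1 K) -> dt_morph_on (@inGenM1 K) f1 -> dt_morph_on (@inGenM1 K) f2 ->
  forall x, inGenM1 x -> f1 x = f2 x.
Proof.
move=> fM m1 m2 x; elim=> {x} [|| x y Px IHx Py IHy | a x Px IHx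
  | x y Px IHx Py IHy | x y Px IHx Py IHy | x y Px IHx Py IHy] //.
- by rewrite !dt_morph_on_szero.
- by have [-> _ _ _ _] := m1 x y Px Py; have [-> _ _ _ _] := m2 x y Px Py; rewrite IHx IHy.
- by have [_ -> _ _ _] := m1 x x Px Px; have [_ -> _ _ _] := m2 x x Px Px; rewrite IHx.
- by have [_ _ -> _ _] := m1 x y Px Py; have [_ _ -> _ _] := m2 x y Px Py; rewrite IHx IHy.
- by have [_ _ _ -> _] := m1 x y Px Py; have [_ _ _ -> _] := m2 x y Px Py; rewrite IHx IHy.
- by have [_ _ _ _ ->] := m1 x y Px Py; have [_ _ _ _ ->] := m2 x y Px Py; rewrite IHx IHy.
Qed.

Theorem mainTheorem2 (K : fieldType) (charK0 : [pchar K] =i pred0) :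
  free_dendTri_on (@inGenM1 K) (M1 K).
Proof.
move=> D d; split.
  by exists (dt_extend d); split; [exact: dt_extend_M1 | exact: dt_extend_morph].
by move=> f1 f2 h1 h2; apply: dt_morph_on_unique; rewrite h1 h2.
Qed.
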